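(* Let $s,r,R$ be positive integers with $s\ge 2$, and let $\delta=(r+1)(R+1)-sr-1$. Suppose $\delta\ge 1$ and $R+1\le sr$ (so that $B(R)\neq\mathbb F_q^{s\times r}$). Then there exists an $R$-sticky vector $m\in\mathbb F_q^{s\times r}$ for $B(R)$; i.e. there is $m\notin B(R)$ such that every ball $B(c,R)$ containing $m$ intersects $B(R)$. Consequently, for $\delta\ge 1$ there are no non-trivial $R$-perfect codes in $\mathbb F_q^{s\times r}$ with respect to the NRT metric.
   Context: $q$ is a prime power, $\mathbb F_q^{s\times r}$ the set of $s\times r$ matrices over $\mathbb F_q$ with rows $x_1,\dots,x_s\in\mathbb F_q^{1\times r}$. For a row $y=(y_1,\dots,y_r)$, the NRT weight is $w(y)=\max\{j: y_j\neq 0\}$ if $y\neq 0$ and $w(0)=0$; for a matrix $x$, $w(x)=\sum_i w(x_i)$. The NRT metric is $d(x,y)=w(x-y)$; $B(c,R)=\{x: d(x,c)\le R\}$, $B(R)=B(0,R)$. The $R$-closure of $S$ is the set of points $p$ such that every ball of radius $R$ containing $p$ contains some point of $S$; elements of the $R$-closure of $S$ not in $S$ are called $R$-sticky vectors for $S$. A code $C\subseteq\mathbb F_q^{s\times r}$ is $R$-perfect if the balls $B(c,R)$, $c\in C$, are pairwise disjoint and cover $\mathbb F_q^{s\times r}$; it is non-trivial if $|C|>1$ and $C\ne\mathbb F_q^{s\times r}$. *)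

From HB Require Import structures.
From mathcomp Require Import all_boot all_order all_algebra.
Set Implicit Arguments. Unset Strict Implicit. Unset Printing Implicit Defensive.
Import GRing.Theory.
Local Open Scope ring_scope.

(* NRT space F^{s x r}: matrices 'M[F]_(s, r); row i is x i, entries x i j
   with columns j : 'I_r (0-indexed, so column j is coordinate j+1). *)

Definition nrt_row_weight (F : finFieldType) (s r : nat) (x : 'M[F]_(s, r)) (i : 'I_s) : nat :=
  \max_(j < r | x i j != 0 :> F) j.+1.

Definition nrt_weight (F : finFieldType) (s r : nat) (x : 'M[F]_(s, r)) : nat :=
  \sum_(i < s) nrt_row_weight x i.

Definition nrt_dist (F : finFieldType) (s r : nat) (x y : 'M[F]_(s, r)) : nat :=
  nrt_weight (x - y).

Definition nrt_ball (F : finFieldType) (s r : nat) (c : 'M[F]_(s, r)) (R : nat)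
  : {set 'M[F]_(s, r)} :=
  [set x | (nrt_dist x c <= R)%N].

Definition nrt_closure (F : finFieldType) (s r : nat) (R : nat) (S : {set 'M[F]_(s, r)})
  : {set 'M[F]_(s, r)} :=
  [set p | [forall c, (p \in nrt_ball c R) ==> [exists x in S, x \in nrt_ball c R]]].

Definition nrt_sticky (F : finFieldType) (s r : nat) (R : nat) (S : {set 'M[F]_(s, r)})
  (m : 'M[F]_(s, r)) : bool :=
  (m \in nrt_closure R S) && (m \notin S).

Definition nrt_perfect (F : finFieldType) (s r : nat) (R : nat) (C : {set 'M[F]_(s, r)}) : Prop :=
  (forall c1 c2, c1 \in C -> c2 \in C -> c1 != c2 ->
      [disjoint nrt_ball c1 R & nrt_ball c2 R]) /\
  (forall x : 'M[F]_(s, r), exists2 c, c \in C & x \in nrt_ball c R).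

Definition nrt_nontrivial (F : finFieldType) (s r : nat) (C : {set 'M[F]_(s, r)}) : Prop :=
  (1 < #|C|)%N /\ C != [set: 'M[F]_(s, r)].

From HB Require Import structures.
From mathcomp Require Import all_boot all_order all_algebra.
From mathcomp Require Import zify.
Set Implicit Arguments. Unset Strict Implicit. Unset Printing Implicit Defensive.

(* Take for m the matrix whose row weights w_i are as balanced as possible with
   sum R + 1, so that m lies just outside B(R).  Row weights are ultrametric, so
   if d(m, c) <= R then every row of c has weight at most max(w_i, g_i), with
   equality to w_i whenever the corresponding row weight g_i of m - c is smaller.
   Either some nonzero row of m is dominated by m - c, or c reproduces all the
   nonzero rows of m; in both cases the rows of c fall into two groups of total
   weight at most R each, and keeping only the first group gives a common
   point of B(R) and B(c, R).  When s > R + 1 the second case needs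
   delta >= 1: it says that the s - R - 1 rows of c outside the support of m
   weigh less than R.
   Finally, translating a covering ball shows that a sticky vector of B(R)
   excludes every R-perfect code. *)

Section Splitting.
Variables (I : finType) (R : nat).
Implicit Types (f w g : I -> nat) (G : {set I}).

Definition splittable f :=
  exists G, \sum_(i in G) f i <= R /\ \sum_(i in ~: G) f i <= R.

Lemma sum_setC_split G f :
  \sum_i f i = \sum_(i in G) f i + \sum_(i in ~: G) f i.
Proof.
rewrite (bigID (mem G)) /=; congr (_ + _).
by apply: eq_bigl => i; rewrite in_setC.
Qed.

Lemma splittable_or_rigid w g f :
  \sum_i w i = R.+1 -> \sum_i g i <= R ->
  (forall i, f i <= maxn (w i) (g i)) -> (forall i, g i < w i -> f i = w i) ->
  splittable f \/ (forall i, 0 < w i -> f i = w i).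
Proof.
(* Split along [g i < w i]; the first half is light unless no row with
   [0 < w i] is dominated by [g]. *)
move=> sum_w sum_g f_le f_eq.
case: (pickP [pred i | 0 < w i <= g i]) => [i0 /andP[w_i0 wg_i0] | none]; last first.
  by right=> i w_i; apply: f_eq; move: (none i) => /=; rewrite w_i /= ltnNge => ->.
left; exists [set i | g i < w i]; split.
- have i0G : i0 \in ~: [set i | g i < w i] by rewrite !inE -leqNgt.
  have := sum_setC_split [set i | g i < w i] w.
  rewrite sum_w (bigD1 i0 i0G) /= => sum_w_split.
  rewrite (eq_bigr w) => [|i]; first lia.
  by rewrite inE => /f_eq.
- apply: leq_trans sum_g; rewrite [X in _ <= X](sum_setC_split [set i | g i < w i]).
  apply: leq_trans (leq_addl _ _); apply: leq_sum => i.
  rewrite !inE -leqNgt => wg; apply: leq_trans (f_le i) _; lia.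
Qed.

Lemma splittable_positive_bounded f :
  (forall i, 0 < f i <= R) -> \sum_i f i = R.+1 -> splittable f.
Proof.
move=> f_pos sum_f; case: (pickP (fun _ : I => true)) => [i0 _ | empty]; last first.
  by move: sum_f; rewrite big_pred0.
exists [set i0]; rewrite big_set1; split; first by case/andP: (f_pos i0).
have := sum_setC_split [set i0] f; rewrite big_set1 sum_f.
by case/andP: (f_pos i0) => ? _; lia.
Qed.

End Splitting.

Lemma sum_ord_lt_const (s n a : nat) : n <= s -> \sum_(i < s | i < n) a = n * a.
Proof. by move=> ns; rewrite -(big_ord_widen s (fun=> a)) // sum_nat_const card_ord. Qed.

Lemma sum_ord_ltn (s k : nat) : k <= s -> \sum_(i < s) (i < k) = k.
Proof.
move=> ks; rewrite (eq_bigr (fun i : 'I_s => if i < k then 1 else 0)) => [|i _].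
  by rewrite -big_mkcond sum_ord_lt_const ?muln1.
by case: (_ < _).
Qed.

Lemma splittable_prefix_ones (s R : nat) (f : 'I_s -> nat) :
  R < s -> (forall i : 'I_s, i <= R -> f i = 1) ->
  \sum_(i : 'I_s | R < i) f i < R -> splittable R f.
Proof.
move=> Rs f1 tail_lt; set tail := \sum_(i : 'I_s | R < i) f i in tail_lt.
have prefix_sum n : n <= R.+1 -> \sum_(i : 'I_s | i < n) f i = n.
  move=> nR; rewrite (eq_bigr (fun=> 1)) => [|i lt_in]; last by apply: f1; lia.
  by rewrite sum_ord_lt_const ?muln1 //; lia.
have total : \sum_i f i = R.+1 + tail.
  rewrite (bigID (fun i : 'I_s => i < R.+1)) /= prefix_sum //; congr (_ + _).
  by apply: eq_bigl => i; rewrite ltnS -ltnNge.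
(* Keep the tail and all but [tail.+1] of the leading ones. *)
exists [set i : 'I_s | tail < i].
have low : \sum_(i in ~: [set i : 'I_s | tail < i]) f i = tail.+1.
  rewrite -[RHS](prefix_sum tail.+1); last lia.
  by apply: eq_bigl => i; rewrite !inE ltnS leqNgt negbK.
have := sum_setC_split [set i : 'I_s | tail < i] f.
by rewrite total low; split; lia.
Qed.

Section RowWeights.
Import GRing.Theory.
Local Open Scope ring_scope.
Variables (F : finFieldType) (s r : nat).
Implicit Types (x y c m : 'M[F]_(s, r)) (G : {set 'I_s}).
Local Notation rw := nrt_row_weight.

Lemma row_weight_le x i k : (forall j, x i j != 0 -> (j < k)%N) -> (rw x i <= k)%N.
Proof. by move=> lt_k; apply/bigmax_leqP. Qed.

Lemma leq_row_weight x i j : x i j != 0 -> (j < rw x i)%N.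
Proof. exact: (leq_bigmax_cond (P := fun j => x i j != 0)). Qed.

Lemma row_weight_ncols x i : (rw x i <= r)%N.
Proof. by apply: row_weight_le => j _. Qed.

Lemma row_weightN x i : rw (- x) i = rw x i.
Proof. by apply: eq_bigl => j; rewrite mxE oppr_eq0. Qed.

Lemma row_weightD x y i : (rw (x + y) i <= maxn (rw x i) (rw y i))%N.
Proof.
apply: row_weight_le => j; rewrite mxE.
have [x0 | /leq_row_weight x_lt] := eqVneq (x i j) 0.
  by rewrite x0 add0r => /leq_row_weight y_lt; apply: leq_trans y_lt (leq_maxr _ _).
by move=> _; apply: leq_trans x_lt (leq_maxl _ _).
Qed.

Lemma row_weightD_eq x y i : (rw y i < rw x i)%N -> rw (x + y) i = rw x i.
Proof.
move=> lt_yx; apply/eqP; rewrite eqn_leq.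
have := row_weightD x y i; rewrite (maxn_idPl (ltnW lt_yx)) => -> /=.
have := row_weightD (x + y) (- y) i; rewrite addrK row_weightN leq_max.
by case/orP=> // /(leq_trans lt_yx); rewrite ltnn.
Qed.

Definition row_select G c : 'M[F]_(s, r) :=
  \matrix_(i, j) (if i \in G then c i j else 0).

Lemma row_weight_select G c i :
  rw (row_select G c) i = if i \in G then rw c i else 0%N.
Proof.
case: ifP => iG; first by apply: eq_bigl => j; rewrite mxE iG.
by apply: big_pred0 => j; rewrite mxE iG eqxx.
Qed.

Lemma nrt_weight_select G c : nrt_weight (row_select G c) = (\sum_(i in G) rw c i)%N.
Proof. by rewrite big_mkcond; apply: eq_bigr => i _; apply: row_weight_select. Qed.

Lemma row_select_subr G c : row_select G c - c = - row_select (~: G) c.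
Proof.
apply/matrixP => i j; rewrite !mxE in_setC.
by case: (i \in G); rewrite /= ?subrr ?oppr0 ?add0r.
Qed.

Lemma nrt_dist_select G c : nrt_dist (row_select G c) c = (\sum_(i in ~: G) rw c i)%N.
Proof.
rewrite /nrt_dist row_select_subr -nrt_weight_select.
by apply: eq_bigr => i _; apply: row_weightN.
Qed.

Lemma ball0_meets_ball R c :
  splittable R (rw c) -> exists2 x, x \in nrt_ball 0 R & x \in nrt_ball c R.
Proof.
case=> G [in_G out_G]; exists (row_select G c); rewrite inE.
  by rewrite /nrt_dist subr0 nrt_weight_select.
by rewrite nrt_dist_select.
Qed.

Lemma sticky_ball0_of_rigid R m :
  nrt_weight m = R.+1 ->
  (forall c, (forall i, (0 < rw m i)%N -> rw c i = rw m i) -> splittable R (rw c)) ->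
  nrt_sticky R (nrt_ball 0 R) m.
Proof.
move=> wm rigid; apply/andP; split; last by rewrite inE /nrt_dist subr0 wm ltnn.
rewrite inE; apply/forallP => c; apply/implyP; rewrite inE => dmc.
have def_c : c = m + - (m - c) by rewrite opprB addrC subrK.
have split_c : splittable R (rw c).
  case: (@splittable_or_rigid _ R (rw m) (rw (m - c)) (rw c) wm dmc) => //.
  - by move=> i; rewrite {1}def_c -(row_weightN (m - c)); apply: row_weightD.
  - by move=> i lt_i; rewrite def_c row_weightD_eq ?row_weightN.
  - exact: rigid.
have [x x0 xc] := ball0_meets_ball split_c.
by apply/existsP; exists x; rewrite x0.
Qed.

Definition row_weight_mx (w : 'I_s -> nat) : 'M[F]_(s, r) :=
  \matrix_(i, j) (if j.+1 == w i then 1 else 0).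

Lemma row_weight_mxE w i : (w i <= r)%N -> rw (row_weight_mx w) i = w i.
Proof.
move=> le_wr; apply/eqP; rewrite eqn_leq; apply/andP; split.
  by apply: row_weight_le => j; rewrite mxE; case: ifP => [/eqP <-|_] //; rewrite eqxx.
case def_w: (w i) le_wr => [//|k] lt_kr.
by apply: (leq_row_weight (j := Ordinal lt_kr)); rewrite mxE def_w eqxx oner_eq0.
Qed.

End RowWeights.

Definition balanced_weights (s n : nat) (i : 'I_s) : nat := n %/ s + (i < n %% s).

Lemma sum_balanced_weights (s n : nat) : 0 < s -> \sum_(i < s) balanced_weights n i = n.
Proof.
move=> s_pos; rewrite big_split /= sum_nat_const card_ord sum_ord_ltn.
  by rewrite mulnC -divn_eq.
exact/ltnW/ltn_pmod.
Qed.

Lemma balanced_weights_le (s n r : nat) (i : 'I_s) :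
  n <= s * r -> balanced_weights n i <= r.
Proof.
have s_pos : 0 < s by case: s i => [[]|].
rewrite /balanced_weights; have := divn_eq n s; have := ltn_pmod n s_pos.
set k := n %/ s; set q := n %% s; case: ltnP => /= iq; nia.
Qed.

Section StickyBalanced.
Variables (F : finFieldType) (s r R : nat).
Local Notation rw := nrt_row_weight.
Local Notation w := (@balanced_weights s R.+1).
Local Notation m := (row_weight_mx F r w).

Lemma sticky_balanced_few_rows :
  0 < r -> R.+1 < s -> (s - R.+1) * r < R -> nrt_sticky R (nrt_ball 0%R R) m.
Proof.
move=> r_pos Rs tail_lt.
have rw_m i : rw m i = (i < R.+1).
  by rewrite row_weight_mxE /balanced_weights divn_small // modn_small //; case: (_ < _).
apply: sticky_ball0_of_rigid => [|c rigid_c].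
  by rewrite /nrt_weight (eq_bigr _ (fun i _ => rw_m i)) sum_ord_ltn // ltnW.
apply: splittable_prefix_ones => [|i le_iR|]; first exact: ltnW.
  by rewrite rigid_c rw_m ltnS le_iR.
have tail_sum : \sum_(i < s | R < i) r = (s - R.+1) * r.
  have := sum_nat_const 'I_s r; rewrite card_ord (bigID (fun i : 'I_s => i < R.+1)) /=.
  rewrite sum_ord_lt_const 1?ltnW // (eq_bigl (fun i : 'I_s => R < i)) => [|i]; first nia.
  by rewrite -leqNgt.
apply: leq_ltn_trans _ tail_lt; rewrite -tail_sum.
by apply: leq_sum => i _; apply: row_weight_ncols.
Qed.

Lemma sticky_balanced_many_rows :
  1 < s -> s <= R.+1 -> R.+1 <= s * r -> nrt_sticky R (nrt_ball 0%R R) m.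
Proof.
move=> s_gt1 sR Rsr.
have w_pos_le i : 0 < w i <= R.
  rewrite /balanced_weights; have := divn_eq R.+1 s; have := ltn_pmod R.+1 (ltnW s_gt1).
  have : 0 < R.+1 %/ s by rewrite divn_gt0 // ltnW.
  set k := R.+1 %/ s; set q := R.+1 %% s; case: ltnP => /= iq; nia.
have rw_m i : rw m i = w i by rewrite row_weight_mxE // balanced_weights_le.
have sum_w : \sum_i w i = R.+1 by rewrite sum_balanced_weights // ltnW.
apply: sticky_ball0_of_rigid => [|c rigid_c].
  by rewrite /nrt_weight (eq_bigr _ (fun i _ => rw_m i)).
have rw_c i : rw c i = w i by rewrite rigid_c rw_m //; case/andP: (w_pos_le i).
apply: splittable_positive_bounded => [i|]; first by rewrite rw_c.
by rewrite (eq_bigr _ (fun i _ => rw_c i)).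
Qed.

End StickyBalanced.

Section PerfectCodes.
Import GRing.Theory.
Local Open Scope ring_scope.
Variables (F : finFieldType) (s r R : nat).
Implicit Types (x c m a : 'M[F]_(s, r)).

Lemma nrt_ball_translate a c x : (x + a \in nrt_ball (c + a) R) = (x \in nrt_ball c R).
Proof. by rewrite !inE /nrt_dist opprD addrACA subrr addr0. Qed.

Lemma no_perfect_of_sticky_ball0 m :
  nrt_sticky R (nrt_ball 0 R) m -> ~ exists C : {set 'M[F]_(s, r)}, nrt_perfect R C.
Proof.
case/andP=> m_closure m_out [C [disjoint_balls cover]].
have [c0 c0C _] := cover 0; have [c cC] := cover (m + c0).
rewrite -{1}(subrK c0 c) nrt_ball_translate => m_ball.
have [x /andP[x_ball0 x_ball]] : exists x, (x \in nrt_ball 0 R) && (x \in nrt_ball (c - c0) R).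
  move: m_closure; rewrite inE => /forallP/(_ (c - c0))/implyP/(_ m_ball).
  by case/existsP=> x; exists x.
have c_neq_c0 : c != c0.
  by apply: contraNneq m_out => c_eq; move: m_ball; rewrite c_eq subrr.
rewrite -(nrt_ball_translate c0) add0r in x_ball0.
rewrite -(nrt_ball_translate c0) subrK in x_ball.
by rewrite (disjointFr (disjoint_balls c c0 cC c0C c_neq_c0) x_ball) in x_ball0.
Qed.

End PerfectCodes.

Theorem mainTheorem5 (F : finFieldType) (s r R : nat)
  (hs : (2 <= s)%N) (hr : (0 < r)%N) (hR : (0 < R)%N)
  (hdelta : (1 <= (r + 1) * (R + 1) - s * r - 1)%N)
  (hRsr : (R + 1 <= s * r)%N) :
  (exists m : 'M[F]_(s, r), nrt_sticky R (nrt_ball 0 R) m) /\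
  ~ (exists C : {set 'M[F]_(s, r)}, nrt_perfect R C /\ nrt_nontrivial C).
Proof.
have sticky : nrt_sticky R (nrt_ball 0 R) (row_weight_mx F r (@balanced_weights s R.+1)).
  have [few_rows | many_rows] := ltnP R.+1 s.
    by apply: sticky_balanced_few_rows => //; nia.
  by apply: sticky_balanced_many_rows => //; lia.
split; first by eexists; apply: sticky.
by case=> C [perfect _]; apply: (no_perfect_of_sticky_ball0 sticky); exists C.
Qed.
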